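(* Let $\ell\ge1$, $S=\{1,\dots,\ell\}$, and let $\mathbb C(\mathbf X)$ be the field of rational functions in the $X$-variables $X^i_n$ ($i\in S$, $n\in\mathbb Z$) of the infinite quiver $Q(A_\ell)$, with Poisson bracket $\{X_u,X_v\}=\varepsilon_{uv}X_uX_v$. Let $\mathbb C(a)$ be the field of rational functions in the variables $a_i(n)$ ($i\in S$, $n\in\mathbb Z$) with log-canonical Poisson bracket determined by $\{a_i(n),a_i(n')\}=(\delta_{n',n+1}-\delta_{n',n-1})a_i(n)a_i(n')$ for $i\in S$, $\{a_i(n),a_{i+1}(n')\}=(\delta_{n',n-1}-\delta_{n',n})a_i(n)a_{i+1}(n')$ for $1\le i\le\ell-1$, and all other pairs of generators Poisson commuting. Then the field isomorphism $\beta:\mathbb C(\mathbf X)\to\mathbb C(a)$, $X^i_n\mapsto a_i(n)^{-1}$, is a Poisson map.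
   Context: The quiver $Q(A_\ell)$ has vertices $v^i_n$ ($i\in S$, $n\in\mathbb Z$) and arrows $v^i_n\to v^i_{n+1}$ for all $i$, and $v^{i+1}_n\to v^i_n$, $v^i_{n+1}\to v^{i+1}_n$ for $1\le i\le\ell-1$; its exchange matrix is $\varepsilon_{uv}=\#\{\text{arrows }u\to v\}-\#\{\text{arrows }v\to u\}$, and $X^i_n$ is the $X$-variable at $v^i_n$. (In the paper $a_i(n)=y_i(n)y_i(n+1)/(y_{i-1}(n+1)y_{i+1}(n))$ with $y_0=y_{\ell+1}=1$, the image of the Frenkel–Reshetikhin variable $A_{i,aq^{2n+i}}$; the bracket above is the one induced from the Frenkel–Reshetikhin Poisson structure.) *)

From HB Require Import structures.
From mathcomp Require Import all_boot all_order all_algebra.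
Set Implicit Arguments. Unset Strict Implicit. Unset Printing Implicit Defensive.
Import Order.TTheory GRing.Theory Num.Theory.
Local Open Scope ring_scope.

(* Vertices v^i_n of Q(A_l): i : 'I_l encodes the paper's index i+1 in S={1..l}. *)
Definition vertex (l : nat) := ('I_l * int)%type.

(* Number of arrows u -> v in Q(A_l):
   v^i_n -> v^i_{n+1};  v^{i+1}_n -> v^i_n;  v^i_{n+1} -> v^{i+1}_n. *)
Definition narrows (l : nat) (u v : vertex l) : nat :=
  let: (i, n) := u in let: (j, m) := v in
  (((i == j) && (m == n + 1)) : nat)
  + (((nat_of_ord i == (nat_of_ord j).+1) && (m == n)) : nat)
  + (((nat_of_ord j == (nat_of_ord i).+1) && (n == m + 1)) : nat).

Definition eps (l : nat) (u v : vertex l) : int :=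
  (narrows u v)%:Z - (narrows v u)%:Z.

(* coefficient c_{uv} with {a_u, a_v} = c_{uv} a_u a_v, as given in the paper
   (the case i = j+1 is forced by antisymmetry) *)
Definition abr (l : nat) (u v : vertex l) : int :=
  let: (i, n) := u in let: (j, m) := v in
  if i == j then ((m == n + 1) : nat)%:Z - ((m == n - 1) : nat)%:Z
  else if nat_of_ord j == (nat_of_ord i).+1 then
    ((m == n - 1) : nat)%:Z - ((m == n) : nat)%:Z
  else if nat_of_ord i == (nat_of_ord j).+1 then
    ((m == n) : nat)%:Z - ((m == n + 1) : nat)%:Z
  else 0.

Definition is_poisson_bracket (F K : fieldType) (iota : F -> K) (br : K -> K -> K) : Prop :=
  [/\ forall f g, br f g = - br g f,
      forall f g h, br f (g + h) = br f g + br f h,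
      forall f g h, br f (g * h) = br f g * h + g * br f h,
      forall f g h, br f (br g h) + br g (br h f) + br h (br f g) = 0
    & forall c f, br (iota c) f = 0].

Definition generated_by (F K : fieldType) (iota : F -> K) (I : Type) (x : I -> K) : Prop :=
  forall P : K -> Prop,
    (forall c, P (iota c)) -> (forall i, P (x i)) ->
    (forall f g, P f -> P g -> P (f + g)) -> (forall f, P f -> P (- f)) ->
    (forall f g, P f -> P g -> P (f * g)) -> (forall f, P f -> P (f^-1)) ->
    forall f, P f.

(* Fix a field morphism phi from a Poisson field generated by x_i to another
   Poisson field.  For fixed f, both g |-> phi {f, g} and g |-> {phi f, phi g}
   are derivations along phi, and a derivation on a generated field is
   determined by its values on the generators; applying this twice (in each
   argument, using antisymmetry) shows phi is Poisson as soon as it preserves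
   the brackets of generators.  For beta this reduces to
   {a_u^-1, a_v^-1} = c_uv a_u^-1 a_v^-1 whenever {a_u, a_v} = c_uv a_u a_v,
   together with the identity eps = abr of structure constants. *)

From HB Require Import structures.
From mathcomp Require Import all_boot all_order all_algebra.
From mathcomp Require Import ring.
Import Order.TTheory GRing.Theory Num.Theory.
Local Open Scope ring_scope.

Lemma eps_abr (l : nat) (u v : vertex l) : eps u v = abr u v.
Proof.
case: u v => [[i lt_il] n] [[j lt_jl] m]; rewrite /eps /abr /narrows /=.
have -> : (n == m + 1) = (m == n - 1) by rewrite [RHS]eq_sym subr_eq.
rewrite -[Ordinal lt_il == _]/(i == j)%N -[Ordinal lt_jl == _]/(j == i)%N.
rewrite [(j == i)%N]eq_sym [n == m]eq_sym.
have [<- | _] := eqVneq i j; first by rewrite ltn_eqF //= !addn0.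
have [-> | _] := eqVneq j i.+1.
  by rewrite ltn_eqF //= !add0n !addn0; case: (m == n - 1); case: (m == n).
have [_ | //] := eqVneq i j.+1.
by rewrite /= !add0n !addn0; case: (m == n + 1); case: (m == n).
Qed.

Definition derivation_along {K L : fieldType} (phi : {rmorphism K -> L})
    (D : K -> L) : Prop :=
  (forall f g, D (f + g) = D f + D g) /\
  (forall f g, D (f * g) = D f * phi g + phi f * D g).

Section Derivations.
Context {K L : fieldType} {phi : {rmorphism K -> L}} {D : K -> L}.
Hypothesis derD : derivation_along phi D.

Lemma derivation0 : D 0 = 0.
Proof. by apply: (addrI (D 0)); rewrite -(proj1 derD) !addr0. Qed.

Lemma derivation1 : D 1 = 0.
Proof.
have := proj2 derD 1 1; rewrite mulr1 rmorph1 mulr1 mul1r => D1_double.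
by apply: (addrI (D 1)); rewrite addr0 -D1_double.
Qed.

Lemma derivationN f : D (- f) = - D f.
Proof. by apply: (addrI (D f)); rewrite -(proj1 derD) !subrr derivation0. Qed.

Lemma derivationV f : f != 0 -> D f^-1 = - D f / phi f ^+ 2.
Proof.
move=> nz_f; have nz_phif : phi f != 0 by rewrite fmorph_eq0.
have := proj2 derD f f^-1; rewrite mulfV // derivation1 fmorphV => /eqP.
rewrite eq_sym addrC addr_eq0 => /eqP D_fV.
apply: (mulfI nz_phif); rewrite D_fV; field.
by rewrite nz_phif.
Qed.

End Derivations.

Lemma derivation_eq_gen {F K L : fieldType} {iota : F -> K} {I : Type}
    {x : I -> K} {phi : {rmorphism K -> L}} (D1 D2 : K -> L) :
  generated_by iota x -> derivation_along phi D1 -> derivation_along phi D2 ->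
  (forall c, D1 (iota c) = D2 (iota c)) -> (forall i, D1 (x i) = D2 (x i)) ->
  forall f, D1 f = D2 f.
Proof.
move=> gen der1 der2 eq_iota eq_x.
apply: gen => // [f g e1 e2|f e|f g e1 e2|f e].
- by rewrite (proj1 der1) (proj1 der2) e1 e2.
- by rewrite (derivationN der1) (derivationN der2) e.
- by rewrite (proj2 der1) (proj2 der2) e1 e2.
have [-> | nz_f] := eqVneq f 0.
  by rewrite invr0 (derivation0 der1) (derivation0 der2).
by rewrite (derivationV der1) // (derivationV der2) // e.
Qed.

Section PoissonBrackets.
Context {F K : fieldType} {iota : F -> K} {br : K -> K -> K}.
Hypothesis poisson_br : is_poisson_bracket iota br.

Lemma poisson_derivation f :
  derivation_along (idfun : {rmorphism K -> K}) (br f).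
Proof. by case: poisson_br => _ brD brM _ _; split. Qed.

Lemma poisson_br_const_r f c : br f (iota c) = 0.
Proof. by case: poisson_br => anti _ _ _ br_c; rewrite anti br_c oppr0. Qed.

Lemma poisson_brVV {x y c : K} : x != 0 -> y != 0 ->
  br x y = c * x * y -> br x^-1 y^-1 = c * x^-1 * y^-1.
Proof.
move=> nz_x nz_y br_xy; case: poisson_br => anti _ _ _ _.
rewrite (derivationV (poisson_derivation _)) // anti.
rewrite (derivationV (poisson_derivation _)) // anti br_xy /=.
by field; rewrite nz_x nz_y.
Qed.

End PoissonBrackets.

Lemma poisson_morph_gen {F K L : fieldType} {iK : F -> K} {iL : F -> L}
    {brK : K -> K -> K} {brL : L -> L -> L} {I : Type} {x : I -> K}
    {phi : {rmorphism K -> L}} :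
  is_poisson_bracket iK brK -> is_poisson_bracket iL brL ->
  generated_by iK x -> (forall c, phi (iK c) = iL c) ->
  (forall i j, phi (brK (x i) (x j)) = brL (phi (x i)) (phi (x j))) ->
  forall f g, phi (brK f g) = brL (phi f) (phi g).
Proof.
move=> poissonK poissonL gen phi_iota phi_br_x.
have phi_br_r f : (forall j, phi (brK f (x j)) = brL (phi f) (phi (x j))) ->
    forall g, phi (brK f g) = brL (phi f) (phi g).
  move=> eq_x; apply: (derivation_eq_gen (fun g => phi (brK f g))
    (fun g => brL (phi f) (phi g)) gen) => // [||c].
  - have [brD brM] := poisson_derivation poissonK f.
    by split=> g h; rewrite /= ?brD ?brM rmorphD ?rmorphM.
  - have [brD brM] := poisson_derivation poissonL (phi f).
    by split=> g h; rewrite ?rmorphD ?rmorphM ?brD ?brM.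
  rewrite phi_iota (poisson_br_const_r poissonK).
  by rewrite (poisson_br_const_r poissonL) rmorph0.
have phi_br_xl i := phi_br_r _ (phi_br_x i).
move=> f; apply: phi_br_r => j.
case: poissonK => antiK _ _ _ _; case: poissonL => antiL _ _ _ _.
by rewrite antiK rmorphN phi_br_xl -antiL.
Qed.

Theorem proposition4p4 (l : nat) (F KX Ka : fieldType)
  (iX : {rmorphism F -> KX}) (ia : {rmorphism F -> Ka})
  (brX : KX -> KX -> KX) (bra : Ka -> Ka -> Ka)
  (X : vertex l -> KX) (a : vertex l -> Ka) :
  (0 < l)%N ->
  is_poisson_bracket iX brX -> is_poisson_bracket ia bra ->
  generated_by iX X -> generated_by ia a ->
  (forall u, X u != 0) -> (forall u, a u != 0) ->
  (forall u v, brX (X u) (X v) = (eps u v)%:~R * X u * X v) ->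
  (forall u v, bra (a u) (a v) = (abr u v)%:~R * a u * a v) ->
  forall beta : {rmorphism KX -> Ka},
    bijective beta ->
    (forall c, beta (iX c) = ia c) ->
    (forall u, beta (X u) = (a u)^-1) ->
    forall f g, beta (brX f g) = bra (beta f) (beta g).
Proof.
move=> _ poissonX poissona genX _ _ nz_a brX_X bra_a beta _ beta_iota beta_X.
apply: (poisson_morph_gen poissonX poissona genX beta_iota) => u v.
rewrite brX_X !rmorphM rmorph_int !beta_X eps_abr.
by rewrite (poisson_brVV poissona (nz_a u) (nz_a v) (bra_a u v)).
Qed.
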